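(* Let $E$ be a finite-dimensional real affine space, let $\lambda$ be a positive Borel measure on $E$, and let $\mathcal{H}$ be a nonempty subset of $G(E)$ such that $\int e^{h}\,d\lambda=1$ for all $h\in\mathcal{H}$. Let $\overline{\mathcal{H}}$ be the closure of $\mathcal{H}$ in $G(E)$. Then for every $x\in E$ there exists $\bar h\in\overline{\mathcal{H}}$ with $\bar h(x)=\sup_{h\in\mathcal{H}}h(x)$; that is, maximum likelihood estimates always exist in $\overline{\mathcal{H}}$.
   Context: $G(E)$ is the set of generalized affine functions on $E$ (functions $E\to\mathbb{R}\cup\{\pm\infty\}$ that are both convex and concave in the extended-real-valued sense), with the topology of pointwise convergence. Here $e^{+\infty}=+\infty$, $e^{-\infty}=0$. *)

From HB Require Import structures.
From mathcomp Require Import all_boot all_order all_algebra.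
From mathcomp Require Import all_classical all_reals all_analysis.
Set Implicit Arguments. Unset Strict Implicit. Unset Printing Implicit Defensive.
Import Order.TTheory GRing.Theory Num.Theory.
Import numFieldNormedType.Exports.
Local Open Scope classical_set_scope.
Local Open Scope ring_scope.

(* The finite-dimensional real affine space E is modelled as 'rV[R]_n. *)

Definition convex_set_in (R : realType) (V : lmodType R) (S : set V) : Prop :=
  forall u v : V, forall t : R, 0 <= t <= 1 -> S u -> S v ->
    S ((1 - t) *: u + t *: v).

Definition epigraph (R : realType) n (f : 'rV[R]_n -> \bar R)
  : set ('rV[R]_n * R^o) := [set p | (f p.1 <= (p.2)%:E)%E].
Definition hypograph (R : realType) n (f : 'rV[R]_n -> \bar R)
  : set ('rV[R]_n * R^o) := [set p | ((p.2)%:E <= f p.1)%E].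

Definition econvex (R : realType) n (f : 'rV[R]_n -> \bar R) : Prop :=
  convex_set_in (epigraph f).
Definition econcave (R : realType) n (f : 'rV[R]_n -> \bar R) : Prop :=
  convex_set_in (hypograph f).

Definition gen_affine (R : realType) n : set ('rV[R]_n -> \bar R) :=
  [set f | econvex f /\ econcave f].

Definition borelE (R : realType) n :=
  g_sigma_algebraType (@open 'rV[R]_n).

From HB Require Import structures.
From mathcomp Require Import all_boot all_order all_algebra.
From mathcomp Require Import all_classical all_reals all_analysis.
From mathcomp Require Import ring lra.
Import Order.TTheory GRing.Theory Num.Theory.
Import numFieldNormedType.Exports.
Local Open Scope classical_set_scope.
Local Open Scope ring_scope.

(* The space of functions E -> [-oo, +oo] with pointwise convergence is
   compact by Tychonoff, [-oo, +oo] being the continuous image of [-1, 1]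
   under [expand].  A cluster point of the members of H whose value at x
   approaches the supremum lies in the closure of H and, evaluation at x being
   continuous, attains the supremum.  It is still generalized affine because
   the strict forms of the convexity and concavity inequalities cut out closed
   sets of functions. *)

Lemma closure_sub_closed {T : topologicalType} {A C : set T} :
  closed C -> A `<=` C -> closure A `<=` C.
Proof. by move=> cC AC; rewrite closureE; exact: smallest_sub. Qed.

Section ExtendedRealsCompact.
Variable R : realType.

Lemma contract_expand_cases (r : R) :
  [\/ r <= -1 /\ contract (expand r) = -1,
      1 <= r /\ contract (expand r) = 1 |
      [/\ -1 <= r, r <= 1 & contract (expand r) = r]].
Proof.
have [rN1|N1r] := lerP r (-1); first by constructor 1; rewrite expandN1.
have [r1|r1] := lerP 1 r; first by constructor 2; rewrite expand1.
constructor 3; split; [exact: ltW | exact: ltW |].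
by rewrite expandK // inE ler_norml !ltW.
Qed.

Lemma contract_expand_lipschitz (x y : R) :
  `|contract (expand x) - contract (expand y)| <= `|x - y|.
Proof.
have xy : x - y <= `|x - y| by exact: ler_norm.
have yx : y - x <= `|x - y| by rewrite distrC; exact: ler_norm.
apply/ler_normlP.
by case: (contract_expand_cases x) => [[? ->]|[? ->]|[? ? ->]];
   case: (contract_expand_cases y) => [[? ->]|[? ->]|[? ? ->]]; split; lra.
Qed.

Lemma expand_continuous : continuous (@expand R).
Proof.
move=> x; apply/cvg_ballP => e e0; apply/nbhs_ballP; exists e => // t xt.
exact: le_lt_trans (contract_expand_lipschitz _ _) xt.
Qed.

Lemma ereal_compact : compact [set: \bar R].
Proof.
have -> : [set: \bar R] = @expand R @` `[-1, 1]%classic.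
  apply/seteqP; split => // y _; exists (contract y) => /=; last exact: contractK.
  by rewrite in_itv /= -ler_norml contract_le1.
apply: continuous_compact; last exact: segment_compact.
exact/continuous_subspaceT/expand_continuous.
Qed.

End ExtendedRealsCompact.

Lemma ptws_compact {T : eqType} {U : topologicalType} :
  compact [set: U] -> compact [set: {ptws T -> U}].
Proof.
move=> cU; have := @tychonoff T (fun=> U) (fun=> setT) (fun=> cU).
by congr compact; apply/seteqP.
Qed.

Lemma ptws_eval_continuous {T : eqType} {U : topologicalType} (x : T) :
  continuous (fun g : {ptws T -> U} => g x).
Proof. exact: @proj_continuous T (fun=> U) x. Qed.

Lemma closed_ptws_eval {T : eqType} {U : topologicalType} (x : T) {A : set U} :
  closed A -> closed [set g : {ptws T -> U} | A (g x)].
Proof. exact: (continuous_closedP _).1 (ptws_eval_continuous x) A. Qed.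

Section ClosureAttainsSup.
Context {R : realType} {X : topologicalType} {phi : X -> \bar R}.
Hypotheses (cX : compact [set: X]) (cphi : continuous phi).

Lemma closed_phi_ge (r : \bar R) : closed [set p | (r <= phi p)%E].
Proof.
exact: (continuous_closedP _).1 cphi _ (closed_ereal_le_ereal (y := r)).
Qed.

Lemma closed_phi_le (r : \bar R) : closed [set p | (phi p <= r)%E].
Proof.
exact: (continuous_closedP _).1 cphi _ (closed_ereal_ge_ereal (y := r)).
Qed.

(* The tails {h in H | r <= phi h} are indexed by the levels r reached in H,
   not by the r below the supremum: this keeps the filter proper even when the
   supremum is attained, e.g. when it is -oo. *)
Lemma closure_attains_ereal_sup (H : set X) : H !=set0 ->
  exists2 p, closure H p & phi p = ereal_sup (phi @` H).
Proof.
move=> [h0 Hh0].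
pose D := [set r | exists2 h, H h & (r <= phi h)%E].
pose B r := [set h | H h /\ (r <= phi h)%E].
have BH r : B r `<=` H by move=> h [].
have FF : ProperFilter (filter_from D B).
  apply: filter_from_proper; last by move=> r [h Hh rh]; exists h.
  apply: filter_from_filter; first by exists (phi h0), h0.
  move=> i j [hi Hhi ihi] [hj Hhj jhj]; exists (Order.max i j).
    by case: leP => _; [exists hj | exists hi].
  by move=> h [Hh]; rewrite ge_max => /andP[].
have [p [_ clp]] := cX _ FF filterT.
have clB r : D r -> closure (B r) p.
  by move=> Dr C nC; apply: clp nC; exists r.
have clHp : closure H p.
  by apply: closureS (BH (phi h0)) _ _; apply: clB; exists h0.
exists p => //; apply/eqP; rewrite eq_le; apply/andP; split.
- have Hle : H `<=` [set q | (phi q <= ereal_sup (phi @` H))%E].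
    by move=> h Hh; apply: ereal_sup_ubound; exists h.
  exact: (closure_sub_closed (closed_phi_le _) Hle).
- apply: ge_ereal_sup => _ [h Hh <-].
  have Bge : B (phi h) `<=` [set q | (phi h <= phi q)%E] by move=> q [].
  by apply: (closure_sub_closed (closed_phi_ge _) Bge); apply: clB; exists h.
Qed.

End ClosureAttainsSup.

Section GeneralizedAffineClosure.
Variables (R : realType) (n : nat).
Local Notation E := 'rV[R]_n.

Lemma econvexP (f : E -> \bar R) : econvex f <->
  (forall (x y : E) (t a b : R), 0 <= t <= 1 ->
    (f x < a%:E)%E -> (f y < b%:E)%E ->
    (f ((1 - t) *: x + t *: y)%R <= ((1 - t) * a + t * b)%R%:E)%E).
Proof.
split=> [cf x y t a b t01 fx fy|cf [x a] [y b] t t01 /= fx fy].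
  exact: (cf (x, a) (y, b) t t01 (ltW fx) (ltW fy)).
change (f ((1 - t) *: x + t *: y)%R <= ((1 - t) * a + t * b)%:E)%E.
apply/lee_addgt0Pr => e e0.
have lt_add_e r (c : R) : (r <= c%:E)%E -> (r < (c + e)%:E)%E.
  by move=> rc; apply: le_lt_trans rc _; rewrite lte_fin ltrDl.
have := cf x y t (a + e) (b + e) t01 (lt_add_e _ _ fx) (lt_add_e _ _ fy).
by rewrite -EFinD; congr (_ <= _%:E)%E; ring.
Qed.

Lemma econcaveP (f : E -> \bar R) : econcave f <->
  (forall (x y : E) (t a b : R), 0 <= t <= 1 ->
    (a%:E < f x)%E -> (b%:E < f y)%E ->
    (((1 - t) * a + t * b)%R%:E <= f ((1 - t) *: x + t *: y)%R)%E).
Proof.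
split=> [cf x y t a b t01 fx fy|cf [x a] [y b] t t01 /= fx fy].
  exact: (cf (x, a) (y, b) t t01 (ltW fx) (ltW fy)).
change (((1 - t) * a + t * b)%:E <= f ((1 - t) *: x + t *: y)%R)%E.
apply/lee_subgt0Pr => e e0.
have gt_sub_e r (c : R) : (c%:E <= r)%E -> ((c - e)%:E < r)%E.
  by move=> cr; apply: lt_le_trans cr; rewrite lte_fin ltrBlDr ltrDl.
have := cf x y t (a - e) (b - e) t01 (gt_sub_e _ _ fx) (gt_sub_e _ _ fy).
by rewrite -EFinB; congr (_%:E <= _)%E; ring.
Qed.

Variable H : set (E -> \bar R).
Local Notation clH := (closure (H : set {ptws E -> \bar R})).

(* Each instance of the strict inequality holds on a closed set of functions:
   a union of sub- and superlevel sets of evaluations. *)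
Lemma econvex_closure : (forall h, H h -> econvex h) ->
  forall f, clH f -> econvex f.
Proof.
move=> Hcvx f Hf; apply/econvexP => x y t a b t01 fx fy.
set z := ((1 - t) *: x + t *: y)%R; set c := ((1 - t) * a + t * b)%R.
have Hsub : H `<=` [set g : {ptws E -> \bar R} |
    (a%:E <= g x)%E \/ (b%:E <= g y)%E \/ (g z <= c%:E)%E].
  move=> h /Hcvx /econvexP cvxh.
  have [|hx] := leP a%:E (h x); first by left.
  have [|hy] := leP b%:E (h y); first by right; left.
  by right; right; exact: cvxh.
have Cclosed : closed [set g : {ptws E -> \bar R} |
    (a%:E <= g x)%E \/ (b%:E <= g y)%E \/ (g z <= c%:E)%E].
  apply: closedU; [|apply: closedU].
  - by have := closed_ptws_eval x (closed_ereal_le_ereal (y := a%:E)).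
  - by have := closed_ptws_eval y (closed_ereal_le_ereal (y := b%:E)).
  - by have := closed_ptws_eval z (closed_ereal_ge_ereal (y := c%:E)).
have [|[|//]] := closure_sub_closed Cclosed Hsub _ Hf.
- by rewrite leNgt fx.
- by rewrite leNgt fy.
Qed.

Lemma econcave_closure : (forall h, H h -> econcave h) ->
  forall f, clH f -> econcave f.
Proof.
move=> Hccv f Hf; apply/econcaveP => x y t a b t01 fx fy.
set z := ((1 - t) *: x + t *: y)%R; set c := ((1 - t) * a + t * b)%R.
have Hsub : H `<=` [set g : {ptws E -> \bar R} |
    (g x <= a%:E)%E \/ (g y <= b%:E)%E \/ (c%:E <= g z)%E].
  move=> h /Hccv /econcaveP ccvh.
  have [|hx] := leP (h x) a%:E; first by left.
  have [|hy] := leP (h y) b%:E; first by right; left.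
  by right; right; exact: ccvh.
have Cclosed : closed [set g : {ptws E -> \bar R} |
    (g x <= a%:E)%E \/ (g y <= b%:E)%E \/ (c%:E <= g z)%E].
  apply: closedU; [|apply: closedU].
  - by have := closed_ptws_eval x (closed_ereal_ge_ereal (y := a%:E)).
  - by have := closed_ptws_eval y (closed_ereal_ge_ereal (y := b%:E)).
  - by have := closed_ptws_eval z (closed_ereal_le_ereal (y := c%:E)).
have [|[|//]] := closure_sub_closed Cclosed Hsub _ Hf.
- by rewrite leNgt fx.
- by rewrite leNgt fy.
Qed.

Lemma gen_affine_closure : H `<=` gen_affine (R := R) (n := n) ->
  clH `<=` gen_affine (R := R) (n := n).
Proof.
move=> HG f Hf; split.
- by apply: econvex_closure Hf => h /HG [].
- by apply: econcave_closure Hf => h /HG [].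
Qed.

End GeneralizedAffineClosure.

Theorem theorem4 (R : realType) (n : nat)
  (lambda : {measure set (borelE R n) -> \bar R})
  (H : set ('rV[R]_n -> \bar R)) :
  H !=set0 ->
  H `<=` gen_affine (R := R) (n := n) ->
  (forall h, H h -> (\int[lambda]_x expeR (h x) = 1)%E) ->
  forall x : 'rV[R]_n,
    exists2 hbar : 'rV[R]_n -> \bar R,
      gen_affine hbar /\ closure (H : set {ptws 'rV[R]_n -> \bar R}) hbar &
      hbar x = ereal_sup [set h x | h in H].
Proof.
move=> H0 HG _ x.
have [hbar clh hbarx] := closure_attains_ereal_sup
  (ptws_compact (@ereal_compact R)) (ptws_eval_continuous x) _ H0.
exists hbar; last exact: hbarx.
by split; [exact: gen_affine_closure clh | exact: clh].
Qed.
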